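(* Let $\dot{\mathbf x}=\mathbf f(\sigma,\mathbf x)$ be a multistable regulatory system (MSRS) as defined in the context, with $f_k(\sigma,\mathbf x)=-l(x_k)+\sigma\frac{g(x_k)}{P(x_1,\dots,x_n)+h(x_k)}$, and fix $\sigma>0$. If $\mathbf r=(r_1,\dots,r_n)\in\mathbb R_{>0}^n$ is an equilibrium, then the set $\{r_1,\dots,r_n\}$ has at most two distinct elements.
   Context: A system of ODEs $\frac{dx_k}{dt}=f_k(\sigma,x_1,\dots,x_n)$, $k=1,\dots,n$, is called a multistable regulatory system (MSRS) if $f_k(\sigma,x_1,\dots,x_n)=-l(x_k)+\sigma\frac{g(x_k)}{P(x_1,\dots,x_n)+h(x_k)}$, where $l,g,h$ are real functions of one real variable and $P$ is a real function of $n$ real variables, and: (1) $\sigma$ is a positive parameter; (2) $P$ is symmetric, i.e. unchanged under interchanging any two of its arguments; (3) for every $k$ and every $(x_1,\dots,x_n)\in\mathbb R_{>0}^n$, $P(x_1,\dots,x_n)+h(x_k)>0$; (4) $l(z)\neq 0$ and for every $\sigma>0$ the function $z\mapsto \sigma\frac{g(z)}{l(z)}-h(z)$ has at most one extreme point for $z\in\mathbb R_{>0}$. For a given $\sigma$, a point $\mathbf r\in\mathbb R_{>0}^n$ is an equilibrium if $f_1(\sigma,\mathbf r)=\dots=f_n(\sigma,\mathbf r)=0$.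
   Formalization: The functions l, g and h are also continuous on $\mathbb R_{>0}$, and an extreme point is taken as a non-strict local maximum or minimum of $z\mapsto \sigma\frac{g(z)}{l(z)}-h(z)$ relative to $\mathbb R_{>0}$. Each condition added here is assumed in the paper as well or is needed for the statement above to hold. *)

From mathcomp Require Import all_boot all_order all_algebra all_fingroup.
From mathcomp Require Import all_classical all_reals all_analysis.
Set Implicit Arguments. Unset Strict Implicit. Unset Printing Implicit Defensive.
Import Order.TTheory GRing.Theory Num.Theory numFieldNormedType.Exports.
Local Open Scope ring_scope.

Section MSRS.
Variables (R : realType) (n : nat).

Definition msrs_f (l g h : R -> R) (P : ('I_n -> R) -> R)
  (sigma : R) (x : 'I_n -> R) (k : 'I_n) : R :=
  - l (x k) + sigma * (g (x k) / (P x + h (x k))).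

Definition is_extreme_point (phi : R -> R) (z : R) : Prop :=
  0 < z /\ exists2 e : R, 0 < e &
    ((forall y, 0 < y -> `|y - z| < e -> phi y <= phi z) \/
     (forall y, 0 < y -> `|y - z| < e -> phi z <= phi y)).

Definition at_most_one_extreme_point (phi : R -> R) : Prop :=
  forall z1 z2, is_extreme_point phi z1 -> is_extreme_point phi z2 -> z1 = z2.

Definition symmetric_fun (P : ('I_n -> R) -> R) : Prop :=
  forall (i j : 'I_n) (x : 'I_n -> R), P (fun k => x (tperm i j k)) = P x.

Definition positive_vec (x : 'I_n -> R) : Prop := forall k, 0 < x k.

(* Conditions (2)-(4) of the definition of an MSRS (condition (1),
   sigma > 0, is imposed on the parameter separately). *)
Definition is_MSRS (l g h : R -> R) (P : ('I_n -> R) -> R) : Prop :=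
  [/\ symmetric_fun P,
      (forall x, positive_vec x -> forall k, 0 < P x + h (x k)),
      (forall z, 0 < z -> l z != 0) &
      (forall sigma, 0 < sigma ->
         at_most_one_extreme_point (fun z => sigma * (g z / l z) - h z))].

Definition is_equilibrium (l g h : R -> R) (P : ('I_n -> R) -> R)
  (sigma : R) (r : 'I_n -> R) : Prop :=
  positive_vec r /\ forall k, msrs_f l g h P sigma r k = 0.

End MSRS.

(* At an equilibrium every coordinate r_k solves phi(r_k) = P(r), where
   phi(z) = sigma g(z)/l(z) - h(z): the same level for all k, since P(r) does
   not depend on k.  If phi took one value at three points a < b < d, then,
   as in Rolle's theorem, phi would have an extreme point in (a, b) and
   another in (b, d), contradicting condition (4). *)

From mathcomp Require Import all_boot all_order all_algebra all_fingroup.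
From mathcomp Require Import all_classical all_reals all_analysis.
From mathcomp Require Import lra.
Import Order.TTheory GRing.Theory Num.Theory numFieldNormedType.Exports.
Set Implicit Arguments. Unset Strict Implicit.
Local Open Scope ring_scope.

Lemma increasing_triple_of_size_undup {d} (T : orderType d) (s : seq T) :
  (2 < size (undup s))%N ->
  exists x y z, [/\ x \in s, y \in s, z \in s & (x < y < z)%O].
Proof.
move=> s3; have [x0 _] : exists x0 : T, true by case: s s3 => // x; exists x.
set t := sort <=%O (undup s).
have t_lt : sorted <%O t by rewrite sort_lt_sorted undup_uniq.
have size_t : (2 < size t)%N by rewrite size_sort.
have in_s i : (i < 3)%N -> nth x0 t i \in s.
  move=> i3; rewrite -mem_undup -(mem_sort <=%O) mem_nth //.
  exact: leq_trans i3 size_t.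
have lt_nth i j : (i < j < 3)%N -> (nth x0 t i < nth x0 t j)%O.
  move=> /andP[ij j3]; apply: (sorted_ltn_nth lt_trans) => //; rewrite inE.
    exact: leq_trans (ltn_trans ij j3) size_t.
  exact: leq_trans j3 size_t.
by exists (nth x0 t 0), (nth x0 t 1), (nth x0 t 2); rewrite !in_s ?lt_nth.
Qed.

Section ExtremePoints.
Variable R : realType.
Implicit Types (phi : R -> R) (a b d w : R).

Lemma interval_nbhs a b w : a < w -> w < b ->
  exists2 e : R, 0 < e & forall y, `|y - w| < e -> a <= y <= b.
Proof.
move=> aw wb; exists (Num.min (w - a) (b - w)); first by rewrite lt_min !subr_gt0 aw wb.
move=> y; rewrite lt_min !ltr_norml => /andP[/andP[? ?] /andP[? ?]].
apply/andP; split; lra.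
Qed.

Lemma is_extreme_point_max phi a b w : 0 < a -> a < w -> w < b ->
  (forall t, a <= t <= b -> phi t <= phi w) -> is_extreme_point phi w.
Proof.
move=> a0 aw wb wmax; split; first exact: lt_trans aw.
have [e e0 near_w] := interval_nbhs aw wb.
by exists e => //; left => y _ /near_w; apply: wmax.
Qed.

Lemma is_extreme_point_min phi a b w : 0 < a -> a < w -> w < b ->
  (forall t, a <= t <= b -> phi w <= phi t) -> is_extreme_point phi w.
Proof.
move=> a0 aw wb wmin; split; first exact: lt_trans aw.
have [e e0 near_w] := interval_nbhs aw wb.
by exists e => //; right => y _ /near_w; apply: wmin.
Qed.

(* Rolle's theorem without derivatives: the maximum or the minimum of phi on
   [a, b] is interior, unless phi is constant there. *)
Lemma extreme_point_between phi a b : 0 < a -> a < b ->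
  {within `[a, b], continuous phi}%classic -> phi a = phi b ->
  exists2 z, a < z < b & is_extreme_point phi z.
Proof.
move=> a0 ab phi_cont phi_ab.
have in_ab t : a <= t <= b -> t \in `[a, b] by rewrite in_itv.
have [M /[!in_itv] /= /andP[aM Mb] Mmax] := EVT_max (ltW ab) phi_cont.
have [m /[!in_itv] /= /andP[am mb] mmin] := EVT_min (ltW ab) phi_cont.
have [/andP[aM' Mb']|M_end] := boolP ((a < M) && (M < b)).
  exists M; first by rewrite aM' Mb'.
  by apply: (is_extreme_point_max a0 aM' Mb') => t /in_ab /Mmax.
have [/andP[am' mb']|m_end] := boolP ((a < m) && (m < b)).
  exists m; first by rewrite am' mb'.
  by apply: (is_extreme_point_min a0 am' mb') => t /in_ab /mmin.
have endpoint_value x : a <= x -> x <= b -> ~~ ((a < x) && (x < b)) -> phi x = phi a.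
  move=> ax xb; rewrite negb_and -!leNgt => /orP[xa|bx].
  - by rewrite (@le_anti _ _ x a) ?xa.
  - by rewrite (@le_anti _ _ x b) ?bx ?xb.
have [Ma ma] := (endpoint_value _ aM Mb M_end, endpoint_value _ am mb m_end).
have [amid midb] : a < (a + b) / 2 /\ (a + b) / 2 < b by split; lra.
exists ((a + b) / 2); first by rewrite amid midb.
apply: (is_extreme_point_max a0 amid midb) => t /in_ab /Mmax /le_trans; apply.
by rewrite Ma -ma; apply/mmin/in_ab; rewrite !ltW.
Qed.

Lemma no_three_level_points phi a b d :
  at_most_one_extreme_point phi ->
  (forall z, 0 < z -> {for z, continuous phi}) ->
  0 < a -> a < b -> b < d -> phi a = phi b -> phi b = phi d -> False.
Proof.
move=> phi_ext phi_cont a0 ab bd phi_ab phi_bd.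
have cont_on x y : 0 < x -> {within `[x, y], continuous phi}%classic.
  move=> x0; apply: continuous_in_subspaceT => z /[!inE] /= /[!in_itv] /andP[xz _].
  exact/phi_cont/(lt_le_trans x0).
have b0 : 0 < b by exact: lt_trans ab.
have [z1 /andP[_ z1b] z1_ext] := extreme_point_between a0 ab (cont_on _ _ a0) phi_ab.
have [z2 /andP[bz2 _] z2_ext] := extreme_point_between b0 bd (cont_on _ _ b0) phi_bd.
by have := phi_ext _ _ z1_ext z2_ext; lra.
Qed.

End ExtremePoints.

Section Equilibrium.
Variables (R : realType) (n : nat) (l g h : R -> R) (P : ('I_n -> R) -> R).
Variable sigma : R.

Definition msrs_level (z : R) : R := sigma * (g z / l z) - h z.

Lemma msrs_level_equilibrium r k : is_MSRS l g h P ->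
  is_equilibrium l g h P sigma r -> msrs_level (r k) = P r.
Proof.
move=> [_ Ppos l_neq0 _] [r_pos /(_ k)]; rewrite /msrs_f /msrs_level => eq0.
have D_neq0 : P r + h (r k) != 0 by rewrite gt_eqF // Ppos.
have cross : sigma * g (r k) = l (r k) * (P r + h (r k)).
  have -> : l (r k) = sigma * (g (r k) / (P r + h (r k))) by lra.
  by rewrite mulrA divfK.
by rewrite mulrA cross mulrAC mulfV ?l_neq0 // mul1r addrK.
Qed.

Lemma msrs_level_continuous z : l z != 0 -> {for z, continuous l} ->
  {for z, continuous g} -> {for z, continuous h} -> {for z, continuous msrs_level}.
Proof.
move=> lz_neq0 l_cont g_cont h_cont; apply: continuousB h_cont.
apply: continuousM; first exact: cst_continuous.
by apply: continuousM g_cont _; apply: continuousV.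
Qed.

End Equilibrium.

Theorem theorem2 (R : realType) (n : nat) (l g h : R -> R)
  (P : ('I_n -> R) -> R) (sigma : R) (r : 'I_n -> R) :
  is_MSRS l g h P ->
  (forall z : R, 0 < z -> {for z, continuous l}) ->
  (forall z : R, 0 < z -> {for z, continuous g}) ->
  (forall z : R, 0 < z -> {for z, continuous h}) ->
  0 < sigma ->
  is_equilibrium l g h P sigma r ->
  (size (undup [seq r i | i : 'I_n]) <= 2)%N.
Proof.
move=> msrs l_cont g_cont h_cont sigma_gt0 eqr.
have [_ _ l_neq0 one_extreme] := msrs.
have level_cont z : 0 < z -> {for z, continuous (msrs_level l g h sigma)}.
  by move=> z0; apply: msrs_level_continuous; auto.
have level k := msrs_level_equilibrium k msrs eqr.
have [r_pos _] := eqr.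
rewrite leqNgt; apply/negP => /increasing_triple_of_size_undup[x [y [z []]]].
move=> /mapP[i _ ->] /mapP[j _ ->] /mapP[k _ ->] /andP[ij jk].
apply: (no_three_level_points (one_extreme _ sigma_gt0) level_cont (r_pos i) ij jk).
  exact: etrans (level i) (esym (level j)).
exact: etrans (level j) (esym (level k)).
Qed.
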